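(* Fix $k\in\mathbb{N}$, $q\in(0,1)$, $s=q^{-1/2}$ and $u>s$. There is a constant $\tilde C$ depending on $k,q,u$ such that for every $\lambda\in\mathsf{Sign}_k^+$ and every $\pi\in\mathcal{P}_{\lambda/\varnothing}$, $$|\mathcal{W}(\pi)|\le\tilde C\left(\frac{u-s}{su-1}\right)^{|\lambda|},$$ where $|\lambda|=\lambda_1+\dots+\lambda_k$.
   Context: $\mathsf{Sign}_k^+$ is the set of $\lambda=(\lambda_1\ge\dots\ge\lambda_k)$ with $\lambda_i\in\mathbb{Z}_{\ge0}$. A vertex has type $(i_1,j_1;i_2,j_2)$ if $i_1$ (resp. $j_1$) paths enter from below (resp. the left) and $i_2$ (resp. $j_2$) leave upward (resp. right). Weights with spectral parameter $z$ ($g\in\mathbb{Z}_{\ge0}$; all other types weight $0$): $w_z(g,0;g,0)=\frac{1-sq^gz}{1-sz}$, $w_z(g+1,0;g,1)=\frac{(1-s^2q^g)z}{1-sz}$, $w_z(g,1;g,1)=\frac{z-sq^g}{1-sz}$, $w_z(g,1;g+1,0)=\frac{1-q^{g+1}}{1-sz}$. For $\lambda\in\mathsf{Sign}_k^+$, $\mathcal{P}_{\lambda/\varnothing}$ is the set of collections of up-right paths in $\mathbb{Z}_{\ge0}\times\{1,\dots,k\}$ with at most one path per horizontal edge (vertical edges may carry several), one path entering through $(-1,y)\to(0,y)$ for each $y=1,\dots,k$, none entering from the bottom, and paths exiting at the top through $(\lambda_i,k)\to(\lambda_i,k+1)$, $i=1,\dots,k$ (with multiplicity). For such $\pi$, $\mathcal{W}(\pi)=\prod_{(x,y)}w_u(\text{type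 of }(x,y))$ (all spectral parameters equal to $u$). *)

From HB Require Import structures.
From mathcomp Require Import all_boot all_order all_algebra.
From mathcomp Require Import reals.
Set Implicit Arguments. Unset Strict Implicit. Unset Printing Implicit Defensive.
Import Order.TTheory GRing.Theory Num.Theory.
Local Open Scope ring_scope.

(* Vertex weight w_z(i1,j1;i2,j2): i1 paths from below, j1 from the left,
   i2 leave upward, j2 leave to the right. *)
Definition vweight {R : realType} (s q z : R) (i1 j1 i2 j2 : nat) : R :=
  match j1, j2 with
  | 0%N, 0%N => if i1 == i2 then (1 - s * q ^+ i1 * z) / (1 - s * z) else 0
  | 0%N, 1%N => if i1 == i2.+1 then (1 - s ^+ 2 * q ^+ i2) * z / (1 - s * z) else 0
  | 1%N, 1%N => if i1 == i2 then (z - s * q ^+ i1) / (1 - s * z) else 0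
  | 1%N, 0%N => if i2 == i1.+1 then (1 - q ^+ i2) / (1 - s * z) else 0
  | _, _ => 0
  end.

Definition is_signature (k : nat) (lam : 'I_k -> nat) : Prop :=
  forall i j : 'I_k, (i <= j)%N -> (lam j <= lam i)%N.

Definition sig_size (k : nat) (lam : 'I_k -> nat) : nat := (\sum_(i < k) lam i)%N.

Definition sig_mult (k : nat) (lam : 'I_k -> nat) (x : nat) : nat :=
  #|[pred i : 'I_k | lam i == x]|.

(* A path collection in P_{lam/empty} encoded by its edge occupation numbers:
   h x y = number of paths on the horizontal edge (x-1,y) -> (x,y)
           (so h 0 y is the edge (-1,y) -> (0,y)),
   v x y = number of paths on the vertical edge (x,y-1) -> (x,y). *)
Definition is_path_config (k : nat) (lam : 'I_k -> nat)
    (h v : nat -> nat -> nat) : Prop :=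
  [/\ (forall y, (1 <= y <= k)%N -> h 0%N y = 1%N),
      (forall x y, (1 <= y <= k)%N -> (h x y <= 1)%N),
      (forall x, v x 1%N = 0%N),
      (forall x, v x k.+1 = sig_mult lam x) &
      (forall x y, (1 <= y <= k)%N -> (h x y + v x y = h x.+1 y + v x y.+1)%N)].

(* Weight W(pi): product over all vertices (x,y), x >= 0, 1 <= y <= k.
   Vertices with x > lam_1 carry no path (flow conservation), hence weight 1,
   so the product is taken over x <= max_i lam_i. *)
Definition config_weight {R : realType} (s q z : R) (k : nat) (lam : 'I_k -> nat)
    (h v : nat -> nat -> nat) : R :=
  \prod_(x < (\max_(i < k) lam i).+1)
    \prod_(1 <= y < k.+1) vweight s q z (v x y) (h x y) (v x y.+1) (h x.+1 y).

(* Every vertex weight is bounded by B^(paths on its two vertical edges)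
   times r^(paths leaving it to the right), where r = (u - s)/(su - 1) <= 1:
   an empty vertex has weight 1, a vertex crossed by a single horizontal path
   has weight -r, and every other weight is uniformly bounded and has at most
   one path leaving to the right.  Flow conservation shows that at most k
   paths cross each horizontal level, so the vertical exponents add up to at
   most 2k^2, and that exactly #{i | x <= lam_i} paths enter column x, so the
   horizontal edges to the right of column 0 carry |lam| paths in total. *)

From mathcomp Require Import all_boot all_order all_algebra.
From mathcomp Require Import reals.
From mathcomp Require Import zify ring lra.
Set Implicit Arguments. Unset Strict Implicit.
Import Order.TTheory GRing.Theory Num.Theory.

Section Flow.
Variables (k : nat) (h v : nat -> nat -> nat).
Hypotheses (h_left : forall y, 1 <= y <= k -> h 0 y = 1)
           (v_bottom : forall x, v x 1 = 0)
           (flow : forall x y, 1 <= y <= k ->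
              h x y + v x y = h x.+1 y + v x y.+1).

Lemma sum_h_succ x j : j <= k ->
  \sum_(1 <= y < j.+1) h x y = \sum_(1 <= y < j.+1) h x.+1 y + v x j.+1.
Proof.
elim: j => [|j IH] le_jk; first by rewrite !big_geq // v_bottom.
rewrite !(big_nat_recr j.+1) //= IH; last exact: ltnW.
by rewrite -addnA [v x _ + _]addnC flow // addnA.
Qed.

Lemma sum_h_left j : j <= k -> \sum_(1 <= y < j.+1) h 0 y = j.
Proof.
move=> le_jk; rewrite (eq_big_nat _ _ (F2 := fun=> 1)).
  by rewrite sum_nat_const_nat muln1 subn1.
by move=> y y_range; apply: h_left; lia.
Qed.

Lemma sum_h_flux n j : j <= k ->
  \sum_(1 <= y < j.+1) h n y + \sum_(x < n) v x j.+1 = j.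
Proof.
move=> le_jk; elim: n => [|n IH]; first by rewrite big_ord0 addn0 sum_h_left.
by rewrite big_ord_recr /= -[in RHS]IH (sum_h_succ n le_jk) addnA addnAC.
Qed.

Lemma sum_v_le n j : j <= k -> \sum_(x < n) v x j.+1 <= j.
Proof. by move/(sum_h_flux n) => {2}<-; exact: leq_addl. Qed.

Lemma sum_v_total_le n :
  \sum_(x < n) \sum_(1 <= y < k.+1) (v x y + v x y.+1) <= 2 * k ^ 2.
Proof.
rewrite exchange_big /=.
apply: (@leq_trans (\sum_(1 <= y < k.+1) (k + k))); last first.
  by rewrite sum_nat_const_nat subn1; lia.
rewrite big_nat_cond [X in _ <= X]big_nat_cond; apply: leq_sum => y.
rewrite andbT => /andP[y_gt0 y_le]; rewrite big_split /=.
apply: leq_add; last exact: leq_trans (sum_v_le n y_le) y_le.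
case: y y_gt0 y_le => // y _ y_lt; apply: leq_trans (sum_v_le n (ltnW y_lt)) _.
exact: ltnW.
Qed.

End Flow.

Lemma sig_multE k (lam : 'I_k -> nat) x :
  sig_mult lam x = \sum_(i < k) (lam i == x).
Proof.
by rewrite /sig_mult -sum1_card big_mkcond; apply: eq_bigr => i _; rewrite inE.
Qed.

Lemma sum_h_count k (lam : 'I_k -> nat) h v : is_path_config lam h v ->
  forall x, \sum_(1 <= y < k.+1) h x y = \sum_(i < k) (x <= lam i).
Proof.
case=> h_left _ v_bottom v_top flow; elim=> [|x IH].
  by rewrite (sum_h_left h_left) // sum_nat_const card_ord muln1.
have := sum_h_succ v_bottom flow x (leqnn k).
rewrite IH v_top sig_multE => split_count.
apply: (@addIn (\sum_(i < k) (lam i == x))); rewrite -split_count -big_split /=.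
by apply: eq_bigr => i _; case: ltngtP.
Qed.

Lemma sum_ord_ltn n a : \sum_(x < n) (x < a) = minn a n.
Proof.
elim: n => [|n IH]; first by rewrite big_ord0 minn0.
by rewrite big_ord_recr /= IH; case: ltnP => ? /=; lia.
Qed.

Lemma sum_h_total k (lam : 'I_k -> nat) h v : is_path_config lam h v ->
  \sum_(x < (\max_(i < k) lam i).+1) \sum_(1 <= y < k.+1) h x.+1 y
  = sig_size lam.
Proof.
move=> cfg; under eq_bigr => x _ do rewrite (sum_h_count cfg x.+1).
rewrite exchange_big; apply: eq_bigr => i _.
by rewrite sum_ord_ltn; apply/minn_idPl; apply/leqW/leq_bigmax.
Qed.

Local Open Scope ring_scope.

Lemma vweight_numerators_le (R : realFieldType) (s z t : R) :
  1 <= s -> s < z -> 0 <= t <= 1 ->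
  let N := (1 + s) * (1 + s * z) in
  [/\ `|1 - s * t * z| <= N, `|(1 - s ^+ 2 * t) * z| <= N,
      `|z - s * t| <= N & `|1 - t| <= N].
Proof.
move=> s_ge1 s_lt_z /andP[t_ge0 t_le1] N.
have st_le : 0 <= s * t <= s by rewrite mulr_ge0 ?ler_piMr //; lra.
have sz_ge : z <= s * z by rewrite ler_peMl //; lra.
rewrite /N !ler_norml expr2; split; nra.
Qed.

Section VertexWeights.
Variables (R : realType) (s q z : R).
Hypotheses (q_ge0 : 0 <= q) (q_le1 : q <= 1) (s_ge1 : 1 <= s) (s_lt_z : s < z).

Definition decay := (z - s) / (s * z - 1).
Definition wmax := (1 + s) * (1 + s * z) / (s * z - 1).
Definition vcost := 1 + wmax / decay.

Lemma decay_denom_gt0 : 0 < s * z - 1.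
Proof.
have s_gt0 : 0 < s := lt_le_trans ltr01 s_ge1.
by rewrite subr_gt0 (le_lt_trans s_ge1) // ltr_pMr // (le_lt_trans s_ge1).
Qed.

Lemma decay_gt0 : 0 < decay.
Proof. by rewrite divr_gt0 ?decay_denom_gt0 // subr_gt0. Qed.

Lemma decay_le1 : decay <= 1.
Proof.
rewrite ler_pdivrMr ?decay_denom_gt0 // mul1r -subr_ge0.
have -> : s * z - 1 - (z - s) = (s - 1) * (z + 1) by ring.
have z_gt0 : 0 < z := lt_le_trans ltr01 (le_trans s_ge1 (ltW s_lt_z)).
by rewrite mulr_ge0 ?subr_ge0 // addr_ge0 // ltW.
Qed.

Lemma wmax_ge0 : 0 <= wmax.
Proof.
have s_ge0 : 0 <= s := le_trans ler01 s_ge1.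
have z_ge0 : 0 <= z := ltW (le_lt_trans s_ge0 s_lt_z).
by rewrite divr_ge0 ?(ltW decay_denom_gt0) // mulr_ge0 ?addr_ge0 ?mulr_ge0.
Qed.

Lemma vcost_ge1 : 1 <= vcost.
Proof. by rewrite lerDl divr_ge0 ?wmax_ge0 ?(ltW decay_gt0). Qed.

Lemma wmax_le_vcost_decay : wmax <= vcost * decay.
Proof.
by rewrite mulrDl mul1r divfK ?gt_eqF ?decay_gt0 // lerDr ltW ?decay_gt0.
Qed.

Lemma norm_vweight_le_wmax a b c d : `|vweight s q z a b c d| <= wmax.
Proof.
have div_le X : `|X| <= (1 + s) * (1 + s * z) -> `|X / (1 - s * z)| <= wmax.
  rewrite normrM normfV distrC (gtr0_norm decay_denom_gt0) => ?.
  by rewrite ler_pM2r // invr_gt0 decay_denom_gt0.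
have numerators g := vweight_numerators_le s_ge1 s_lt_z (t := q ^+ g).
have qX_range g : 0 <= q ^+ g <= 1 by rewrite exprn_ge0 // exprn_ile1.
rewrite /vweight; case: b => [|[|b]]; case: d => [|[|d]];
  rewrite ?normr0 ?wmax_ge0 //; case: ifP => _;
  rewrite ?mul0r ?normr0 ?wmax_ge0 //; apply: div_le.
- by have [] := numerators a (qX_range a).
- by have [] := numerators c (qX_range c).
- by have [] := numerators c (qX_range c).
- by have [] := numerators a (qX_range a).
Qed.

Lemma vweight_eq0_right_ge2 a b c d : (2 <= d)%N -> vweight s q z a b c d = 0.
Proof. by case: d => [|[|d]] //; case: b => [|[|b]]. Qed.

Lemma norm_vweight_no_vertical b d : `|vweight s q z 0 b 0 d| <= decay ^+ d.
Proof.
have denom_neq0 : 1 - s * z != 0.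
  by rewrite -oppr_eq0 opprB gt_eqF ?decay_denom_gt0.
rewrite /vweight expr0 !mulr1.
case: b => [|[|b]]; case: d => [|[|d]];
  rewrite ?normr0 ?exprn_ge0 ?(ltW decay_gt0) //=.
  by rewrite divff // normr1.
by rewrite -normrN -mulrN -invrN opprB gtr0_norm ?decay_gt0.
Qed.

Lemma norm_vweight_le a b c d :
  `|vweight s q z a b c d| <= vcost ^+ (a + c) * decay ^+ d.
Proof.
have decay_ge0 := ltW decay_gt0.
have [d_ge2 | d_le1] := leqP 2 d.
  rewrite vweight_eq0_right_ge2 // normr0.
  by rewrite mulr_ge0 ?exprn_ge0 // (le_trans ler01 vcost_ge1).
have [/eqP | ac_gt0] := posnP (a + c).
  rewrite addn_eq0 => /andP[/eqP-> /eqP->].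
  by rewrite mul1r norm_vweight_no_vertical.
apply: le_trans (norm_vweight_le_wmax a b c d) (le_trans wmax_le_vcost_decay _).
apply: ler_pM => //; first exact: le_trans ler01 vcost_ge1.
  exact: ler_eXnr ac_gt0 vcost_ge1.
by case: d d_le1 => [|[|d]] //= _; rewrite ?expr0 ?expr1 ?decay_le1.
Qed.

End VertexWeights.

Lemma norm_config_weight_le (R : realType) (s q z : R) k (lam : 'I_k -> nat)
    h v :
  0 <= q -> q <= 1 -> 1 <= s -> s < z -> is_path_config lam h v ->
  `|config_weight s q z lam h v| <=
    vcost s z ^+ (2 * k ^ 2) * decay s z ^+ sig_size lam.
Proof.
move=> q_ge0 q_le1 s_ge1 s_lt_z cfg; rewrite /config_weight normr_prod.
set n := (\max_(i < k) lam i).+1.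
apply: le_trans (_ : \prod_(x < n) \prod_(1 <= y < k.+1)
    (vcost s z ^+ (v x y + v x y.+1) * decay s z ^+ h x.+1 y) <= _).
  apply: ler_prod => x _; rewrite normr_ge0 normr_prod.
  by apply: ler_prod => y _; rewrite normr_ge0 norm_vweight_le.
under eq_bigr => x _ do rewrite big_split /= !prodrXr.
rewrite big_split /= !prodrXr (sum_h_total cfg).
rewrite ler_pM2r ?exprn_gt0 ?decay_gt0 //.
case: cfg => h_left _ v_bottom _ flow.
apply: (ler_weXn2l (vcost_ge1 s_ge1 s_lt_z)).
exact: sum_v_total_le h_left v_bottom flow n.
Qed.

Unset Implicit Arguments.

Theorem lemma3p5 (R : realType) (k : nat) (q u : R) :
  0 < q -> q < 1 ->
  let s := Num.sqrt (q^-1) in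
  s < u ->
  exists C : R, forall (lam : 'I_k -> nat) (h v : nat -> nat -> nat),
    is_signature lam -> is_path_config lam h v ->
    `|config_weight s q u lam h v| <= C * ((u - s) / (s * u - 1)) ^+ sig_size lam.
Proof.
move=> q_gt0 q_lt1 s s_lt_u.
have s_ge1 : 1 <= s by rewrite -sqrtr1 ltW // ltr_sqrt ?invf_gt1 ?invr_gt0.
exists (vcost s u ^+ (2 * k ^ 2)) => lam h v _ cfg.
exact: norm_config_weight_le (ltW q_gt0) (ltW q_lt1) s_ge1 s_lt_u cfg.
Qed.
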